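(* Let $(X_t)_{t\in Z^m}$ be a definable family of subsets of $R^n$ indexed by $Z^m$. Then $\{X_t:t\in Z^m\}$ is finite. More generally, if $X$ is an $R$-internal definable set and $Y$ is a $Z$-internal definable set (definable in $(Z,R)^{eq}$), then for any definable family $(X_t)_{t\in Y}$ of subsets of $X$, the set $\{X_t:t\in Y\}$ is finite.
   Context: Let $\mathfrak C$ be a monster model, $Z,R$ definable subsets of $\mathfrak C$ which are stably embedded (subsets of $Z^n$, resp. $R^n$, definable with parameters from $\mathfrak C$ are definable with parameters from $Z$, resp. $R$) and fully orthogonal (for all $m,n$, every definable subset of $Z^m\times R^n$ is a finite union of sets $U\times V$ with $U\subseteq Z^m$, $V\subseteq R^n$ definable). $(Z,R)^{eq}$ is the two-sorted structure $(Z,R)$ (no connection between the sorts) expanded by all imaginary sorts; ''definable'' means definable in $(Z,R)^{eq}$ with parameters. A definable set $X$ is $Z$-internal (resp. $R$-internal) if there is a definable surjection from $Z^k$ (resp. $R^k$) onto $X$ for some $k$. *)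

From mathcomp Require Import all_boot.
Set Implicit Arguments. Unset Strict Implicit. Unset Printing Implicit Defensive.

Record language := Language {
  func : Type; rel : Type;
  farity : func -> nat; rarity : rel -> nat }.

Inductive term (L : language) :=
| Var of nat
| App (f : func L) of ('I_(farity f) -> term L).

Inductive formula (L : language) :=
| FEq of term L & term L
| FRel (r : rel L) of ('I_(rarity r) -> term L)
| FNot of formula L
| FAnd of formula L & formula L
| FEx of nat & formula L.

Record structure (L : language) := Structure {
  carrier :> Type;
  finterp : forall f : func L, ('I_(farity f) -> carrier) -> carrier;
  rinterp : forall r : rel L, ('I_(rarity r) -> carrier) -> Prop }.

Definition upd (T : Type) (v : nat -> T) (i : nat) (a : T) : nat -> T :=
  fun j => if j == i then a else v j.

Fixpoint eval (L : language) (M : structure L) (v : nat -> M) (t : term L) : M :=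
  match t with
  | Var i => v i
  | App f args => @finterp L M f (fun j => eval v (args j))
  end.

Fixpoint sat (L : language) (M : structure L) (v : nat -> M) (phi : formula L)
  : Prop :=
  match phi with
  | FEq t1 t2 => eval v t1 = eval v t2
  | FRel r args => @rinterp L M r (fun j => eval v (args j))
  | FNot psi => ~ sat v psi
  | FAnd psi chi => sat v psi /\ sat v chi
  | FEx i psi => exists a : M, sat (upd v i a) psi
  end.

(* Variable convention: the assignment v places the point x : M^n in the
   variables 0..n-1 and the parameter tuple b : M^k in variables n..n+k-1. *)
Definition agree (T : Type) (n k : nat) (v : nat -> T)
  (x : 'I_n -> T) (b : 'I_k -> T) : Prop :=
  (forall i : 'I_n, v i = x i) /\ (forall j : 'I_k, v (n + j) = b j).

Definition mdef_over (L : language) (M : structure L) (P : M -> Prop)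
  (n : nat) (A : ('I_n -> M) -> Prop) : Prop :=
  exists (phi : formula L) (k : nat) (b : 'I_k -> M),
    (forall j, P (b j)) /\
    forall (v : nat -> M) (x : 'I_n -> M), agree v x b -> (A x <-> sat v phi).

Definition mdef (L : language) (M : structure L) (n : nat)
  (A : ('I_n -> M) -> Prop) : Prop := mdef_over (fun _ : M => True) A.

Definition tuple_in (T : Type) (P : T -> Prop) (n : nat) (x : 'I_n -> T) : Prop :=
  forall i, P (x i).

Definition stably_embedded (L : language) (M : structure L) (Z : M -> Prop) :=
  forall (n : nat) (A : ('I_n -> M) -> Prop),
    mdef A -> (forall x, A x -> tuple_in Z x) -> mdef_over Z A.

Definition pt (T : Type) (m n : nat) := (('I_m -> T) * ('I_n -> T))%type.

Definition joinv (T : Type) (m n : nat) (x : 'I_m -> T) (y : 'I_n -> T)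
  : 'I_(m + n) -> T :=
  fun i => match split i with inl j => x j | inr j => y j end.

Definition leftv (T : Type) (m n : nat) (w : 'I_(m + n) -> T) : 'I_m -> T :=
  fun j => w (lshift n j).
Definition rightv (T : Type) (m n : nat) (w : 'I_(m + n) -> T) : 'I_n -> T :=
  fun j => w (rshift m j).

Definition fully_orthogonal (L : language) (M : structure L) (Z R : M -> Prop) :=
  forall (m n : nat) (A : pt M m n -> Prop),
    mdef (fun w : 'I_(m + n) -> M => A (leftv w, rightv w)) ->
    (forall p, A p -> tuple_in Z p.1 /\ tuple_in R p.2) ->
    exists (N : nat) (U : 'I_N -> ('I_m -> M) -> Prop)
           (V : 'I_N -> ('I_n -> M) -> Prop),
      (forall i, mdef (U i) /\ forall x, U i x -> tuple_in Z x) /\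
      (forall i, mdef (V i) /\ forall y, V i y -> tuple_in R y) /\
      forall p : pt M m n, A p <-> exists i, U i p.1 /\ V i p.2.

(* The two-sorted structure (Z,R), with the induced structure on each sort  *)
(* and no connection between the sorts.  Atomic relations on the Z-sort are *)
(* all M-definable subsets of Z^k (similarly for R).                        *)

Inductive zrformula (T : Type) :=
| ZAtom (k : nat) of (('I_k -> T) -> Prop) & ('I_k -> nat)
| RAtom (k : nat) of (('I_k -> T) -> Prop) & ('I_k -> nat)
| ZRNot of zrformula T
| ZRAnd of zrformula T & zrformula T
| ZEx of nat & zrformula T
| REx of nat & zrformula T.

Fixpoint zrsat (T : Type) (Z R : T -> Prop) (vz vr : nat -> T)
  (phi : zrformula T) : Prop :=
  match phi with
  | ZAtom k A args => A (fun j => vz (args j))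
  | RAtom k A args => A (fun j => vr (args j))
  | ZRNot psi => ~ zrsat Z R vz vr psi
  | ZRAnd psi chi => zrsat Z R vz vr psi /\ zrsat Z R vz vr chi
  | ZEx i psi => exists a, Z a /\ zrsat Z R (upd vz i a) vr psi
  | REx i psi => exists a, R a /\ zrsat Z R vz (upd vr i a) psi
  end.

Fixpoint zr_ok (L : language) (M : structure L) (Z R : M -> Prop)
  (phi : zrformula M) : Prop :=
  match phi with
  | ZAtom k A _ => mdef A /\ (forall x, A x -> tuple_in Z x)
  | RAtom k A _ => mdef A /\ (forall x, A x -> tuple_in R x)
  | ZRNot psi => zr_ok Z R psi
  | ZRAnd psi chi => zr_ok Z R psi /\ zr_ok Z R chi
  | ZEx _ psi => zr_ok Z R psi
  | REx _ psi => zr_ok Z R psi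
  end.

Definition ptin (T : Type) (Z R : T -> Prop) (m n : nat) (p : pt T m n) : Prop :=
  tuple_in Z p.1 /\ tuple_in R p.2.

(* Z-variables 0..m-1 carry p.1, m..m+kz-1 the Z-parameters;
   R-variables 0..n-1 carry p.2, n..n+kr-1 the R-parameters. *)
Definition zrdef (L : language) (M : structure L) (Z R : M -> Prop)
  (m n : nat) (A : pt M m n -> Prop) : Prop :=
  exists phi : zrformula M, zr_ok Z R phi /\
  exists (kz : nat) (bz : 'I_kz -> M) (kr : nat) (br : 'I_kr -> M),
    tuple_in Z bz /\ tuple_in R br /\
    forall (p : pt M m n) (vz vr : nat -> M),
      ptin Z R p -> agree vz p.1 bz -> agree vr p.2 br ->
      (A p <-> zrsat Z R vz vr phi).

Definition zrdef2 (L : language) (M : structure L) (Z R : M -> Prop)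
  (m1 n1 m2 n2 : nat) (G : pt M m1 n1 -> pt M m2 n2 -> Prop) : Prop :=
  zrdef Z R (fun p : pt M (m1 + m2) (n1 + n2) =>
    G (leftv p.1, leftv p.2) (rightv p.1, rightv p.2)).

(* Definable sets of (Z,R)^eq: D/E with D <= Z^m x R^n definable and E a    *)
(* definable equivalence relation on D.  Elements are E-classes, handled    *)
(* through representatives.                                                 *)

Record eqset (T : Type) := EqSet {
  es_m : nat; es_n : nat;
  es_D : pt T es_m es_n -> Prop;
  es_E : pt T es_m es_n -> pt T es_m es_n -> Prop }.
Arguments es_D {T} e _ : rename.
Arguments es_E {T} e _ _ : rename.

Definition es_mem (T : Type) (Z R : T -> Prop) (S : eqset T)
  (p : pt T (es_m S) (es_n S)) : Prop := ptin Z R p /\ es_D S p.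
Arguments es_mem {T} Z R S p.

Definition is_eqset (L : language) (M : structure L) (Z R : M -> Prop)
  (S : eqset M) : Prop :=
  zrdef Z R (es_D S) /\ zrdef2 Z R (es_E S) /\
  (forall p, es_mem Z R S p -> es_E S p p) /\
  (forall p q, es_mem Z R S p -> es_mem Z R S q -> es_E S p q -> es_E S q p) /\
  (forall p q r, es_mem Z R S p -> es_mem Z R S q -> es_mem Z R S r ->
     es_E S p q -> es_E S q r -> es_E S p r).

(* G is (the graph, on representatives, of) a definable map from
   Z^a x R^b onto S. *)
Definition def_surj (L : language) (M : structure L) (Z R : M -> Prop)
  (a b : nat) (S : eqset M) (G : pt M a b -> pt M (es_m S) (es_n S) -> Prop)
  : Prop :=
  zrdef2 Z R G /\
  (forall r, ptin Z R r -> exists d, es_mem Z R S d /\ G r d) /\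
  (forall r d d', ptin Z R r -> es_mem Z R S d -> es_mem Z R S d' ->
     G r d -> (G r d' <-> es_E S d d')) /\
  (forall d, es_mem Z R S d -> exists r, ptin Z R r /\ G r d).

Definition R_internal (L : language) (M : structure L) (Z R : M -> Prop)
  (S : eqset M) : Prop :=
  exists k (G : pt M 0 k -> pt M (es_m S) (es_n S) -> Prop), def_surj Z R G.

Definition Z_internal (L : language) (M : structure L) (Z R : M -> Prop)
  (S : eqset M) : Prop :=
  exists k (G : pt M k 0 -> pt M (es_m S) (es_n S) -> Prop), def_surj Z R G.

(* W represents a definable subset of Y x X (a definable family (X_t)_{t in Y}
   of subsets of X, X_t = {[x] | W t x}): definable and invariant under the
   equivalence relations. *)
Definition def_family (L : language) (M : structure L) (Z R : M -> Prop)
  (Y X : eqset M) (W : pt M (es_m Y) (es_n Y) -> pt M (es_m X) (es_n X) -> Prop)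
  : Prop :=
  zrdef2 Z R W /\
  forall y y' x x', es_mem Z R Y y -> es_mem Z R Y y' ->
    es_mem Z R X x -> es_mem Z R X x' ->
    es_E Y y y' -> es_E X x x' -> W y x -> W y' x'.
Arguments def_family {L M} Z R Y X W.

From mathcomp Require Import all_boot boolp.
Set Implicit Arguments. Unset Strict Implicit. Unset Printing Implicit Defensive.

(* Since the two sorts of (Z,R) are not connected, every formula of (Z,R)
   defines a finite union of boxes U x V, with U depending only on the
   Z-variables and V only on the R-variables: atoms are boxes, and finite
   unions of boxes are closed under conjunction, negation and projection
   along either sort.  For such a set, the section at a Z-point a depends only
   on which of the finitely many U's contain a, so there are finitely many
   sections.  In (Z,R)^eq, composing the family with surjections from Z^k onto
   Y and from R^l onto X turns it into a family of subsets of R^l indexed by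
   Z^k, to which the same argument applies. *)

Section BoxUnions.

Definition box_union (A B : Type) (P : A -> B -> Prop) :=
  exists (I : finType) (U : I -> A -> Prop) (V : I -> B -> Prop),
    forall a b, P a b <-> exists i, U i a /\ V i b.

Variables A B : Type.
Implicit Types P Q : A -> B -> Prop.

Lemma box_union_ext P Q :
  (forall a b, P a b <-> Q a b) -> box_union P -> box_union Q.
Proof.
move=> PQ [I [U [V PE]]]; exists I, U, V => a b.
by rewrite -PQ.
Qed.

Lemma box_union_box (U : A -> Prop) (V : B -> Prop) :
  box_union (fun a b => U a /\ V b).
Proof.
exists unit, (fun _ => U), (fun _ => V) => a b.
by split=> [UVab|[]//]; exists tt.
Qed.

Lemma box_unionI P Q :
  box_union P -> box_union Q -> box_union (fun a b => P a b /\ Q a b).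
Proof.
move=> [I [U [V PE]]] [J [U' [V' QE]]].
exists (I * J)%type, (fun ij a => U ij.1 a /\ U' ij.2 a),
  (fun ij b => V ij.1 b /\ V' ij.2 b) => a b.
rewrite PE QE; split.
  by move=> [[i [Ua Vb]] [j [U'a V'b]]]; exists (i, j).
by move=> [[i j] /= [[Ua U'a] [Vb V'b]]]; split; [exists i | exists j].
Qed.

(* (a, b) avoids every box iff, for the set S of boxes whose U-side misses a,
   every box outside S has a V-side missing b. *)
Lemma box_unionN P : box_union P -> box_union (fun a b => ~ P a b).
Proof.
move=> [I [U [V PE]]].
exists {ffun I -> bool}, (fun (S : {ffun I -> bool}) a => forall i, S i -> ~ U i a),
  (fun (S : {ffun I -> bool}) b => forall i, ~~ S i -> ~ V i b) => a b.
rewrite PE; split=> [nPab | [S [SU SV]] [i [Ua Vb]]].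
  exists [ffun i => ~~ `[< U i a >]]; split=> i; rewrite ffunE.
    by move/asboolPn.
  by rewrite negbK => /asboolP Ua Vb; apply: nPab; exists i.
by case Si: (S i); [exact: SU i Si Ua | exact: SV i (negbT Si) Vb].
Qed.

Lemma box_union_sections P :
  box_union P -> exists (K : finType) (key : A -> K),
    forall a a', key a = key a' -> forall b, P a b <-> P a' b.
Proof.
move=> [I [U [V PE]]].
exists {ffun I -> bool}, (fun a => [ffun i => `[< U i a >]]) => a a' keyE b.
have UE i : U i a <-> U i a'.
  have /ffunP/(_ i) := keyE; rewrite !ffunE.
  by move=> E; split=> Ui; apply/asboolP; [rewrite -E | rewrite E]; apply/asboolP.
rewrite !PE; split=> -[i [Ui Vi]]; exists i; split=> //.
  exact: (UE i).1.
exact: (UE i).2.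
Qed.

End BoxUnions.

Lemma box_union_comp (A B A' B' : Type) (f : A' -> A) (g : B' -> B)
    (P : A -> B -> Prop) :
  box_union P -> box_union (fun a b => P (f a) (g b)).
Proof.
move=> [I [U [V PE]]].
by exists I, (fun i a => U i (f a)), (fun i b => V i (g b)) => a b; apply: PE.
Qed.

Lemma box_union_exl (A A' B : Type) (g : A -> A') (P : A -> B -> Prop) :
  box_union P -> box_union (fun a' b => exists a, g a = a' /\ P a b).
Proof.
move=> [I [U [V PE]]].
exists I, (fun i a' => exists a, g a = a' /\ U i a), V => a' b; split.
  by move=> [a [<- /PE [i [Ua Vb]]]]; exists i; split=> //; exists a.
by move=> [i [[a [<- Ua]] Vb]]; exists a; split=> //; apply/PE; exists i.
Qed.

Lemma box_union_exr (A B B' : Type) (g : B -> B') (P : A -> B -> Prop) :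
  box_union P -> box_union (fun a b' => exists b, g b = b' /\ P a b).
Proof.
move=> [I [U [V PE]]].
exists I, U, (fun i b' => exists b, g b = b' /\ V i b) => a b'; split.
  by move=> [b [<- /PE [i [Ua Vb]]]]; exists i; split=> //; exists b.
by move=> [i [Ua [b [<- Vb]]]]; exists b; split=> //; apply/PE; exists i.
Qed.

Lemma zrsat_box_union (T : Type) (Z R : T -> Prop) (phi : zrformula T) :
  box_union (fun vz vr => zrsat Z R vz vr phi).
Proof.
elim: phi => [k A args | k A args | psi IH | psi IH chi IH' | i psi IH
             | i psi IH] /=.
- apply: box_union_ext (box_union_box (fun vz => A (fun j => vz (args j)))
    (fun _ => True)) => vz vr; tauto.
- apply: box_union_ext (box_union_box (fun _ => True)
    (fun vr => A (fun j => vr (args j)))) => vz vr; tauto.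
- exact: box_unionN.
- exact: box_unionI.
- have Bext := box_unionI (box_union_box (fun p : (nat -> T) * T => Z p.2)
      (fun _ : nat -> T => True))
    (box_union_comp (fun p : (nat -> T) * T => upd p.1 i p.2) id IH).
  apply: box_union_ext (box_union_exl (fun p : (nat -> T) * T => p.1) Bext).
  move=> vz vr; split; first by move=> [[v a] /= [-> [[Za _] sat_a]]]; exists a.
  by move=> [a [Za sat_a]]; exists (vz, a).
- have Bext := box_unionI (box_union_box (fun _ : nat -> T => True)
      (fun p : (nat -> T) * T => R p.2))
    (box_union_comp id (fun p : (nat -> T) * T => upd p.1 i p.2) IH).
  apply: box_union_ext (box_union_exr (fun p : (nat -> T) * T => p.1) Bext).
  move=> vz vr; split; first by move=> [[v a] /= [-> [[_ Ra] sat_a]]]; exists a.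
  by move=> [a [Ra sat_a]]; exists (vr, a).
Qed.

Lemma finite_representatives (A : Type) (K : finType) (P : A -> Prop)
    (F : A -> K -> Prop) :
  (forall a, P a -> exists k, F a k) ->
  exists N (ts : 'I_N -> A), (forall i, P (ts i)) /\
    forall a, P a -> exists i k, F a k /\ F (ts i) k.
Proof.
move=> Fdom.
suff [N [ts [Pts tsF]]] : exists N (ts : 'I_N -> A), (forall i, P (ts i)) /\
    forall a k, P a -> F a k -> k \in enum K -> exists i, F (ts i) k.
  exists N, ts; split=> // a Pa; have [k Fak] := Fdom a Pa.
  by have [i Fik] := tsF a k Pa Fak (mem_enum _ k); exists i, k.
elim: (enum K) => [|k0 s [N [ts [Pts tsF]]]].
  exists 0, (ffun0 (card_ord 0)).
  by split=> [[m] | a k _ _]; rewrite ?ltn0 ?in_nil.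
have [[a0 [Pa0 Fa0]] | noa0] := pselect (exists a, P a /\ F a k0).
  exists N.+1, (fun i => if unlift ord0 i is Some j then ts j else a0); split.
    by move=> i; case: (unlift _ _).
  move=> a k Pa Fak; rewrite inE => /orP [/eqP ->|ks].
    by exists ord0; rewrite unlift_none.
  by have [i Fik] := tsF a k Pa Fak ks; exists (lift ord0 i); rewrite liftK.
exists N, ts; split=> // a k Pa Fak; rewrite inE => /orP [/eqP Ek|ks].
  by case: noa0; exists a; rewrite -Ek.
exact: tsF a k Pa Fak ks.
Qed.

Section Tuples.

Variable T : Type.

Lemma leftv_joinv m n (x : 'I_m -> T) (y : 'I_n -> T) : leftv (joinv x y) = x.
Proof.
by apply: funext => j; rewrite /leftv /joinv (unsplitK (inl _ : 'I_m + 'I_n)).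
Qed.

Lemma rightv_joinv m n (x : 'I_m -> T) (y : 'I_n -> T) : rightv (joinv x y) = y.
Proof.
by apply: funext => j; rewrite /rightv /joinv (unsplitK (inr _ : 'I_m + 'I_n)).
Qed.

Lemma tuple_in_joinv (P : T -> Prop) m n (x : 'I_m -> T) (y : 'I_n -> T) :
  tuple_in P (joinv x y) = (tuple_in P x /\ tuple_in P y).
Proof.
apply: propext; split=> [Pxy | [Px Py] i]; last by rewrite /joinv; case: split.
split=> j.
  by have := Pxy (lshift n j); rewrite /joinv (unsplitK (inl _ : 'I_m + 'I_n)).
by have := Pxy (rshift m j); rewrite /joinv (unsplitK (inr _ : 'I_m + 'I_n)).
Qed.

Lemma tuple_in0 (P : T -> Prop) (e : 'I_0 -> T) : tuple_in P e.
Proof. by case. Qed.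

Lemma tuple0_eq (e f : 'I_0 -> T) : e = f.
Proof. by apply: funext => -[]. Qed.

Definition assign (d : T) k l (t : 'I_k -> T) (b : 'I_l -> T) : nat -> T :=
  fun j => if insub j is Some i then t i else
           if insub (j - k) is Some i then b i else d.

Lemma agree_assign (d : T) k l (t : 'I_k -> T) (b : 'I_l -> T) :
  agree (assign d t b) t b.
Proof.
split=> i; rewrite /assign; first by rewrite (valK i).
by rewrite insubN -?leqNgt ?leq_addr // addKn (valK i).
Qed.

End Tuples.

Lemma zrdef_box_union (L : language) (M : structure L) (d : M)
    (Z R : M -> Prop) m n (A : pt M m n -> Prop) :
  zrdef Z R A -> box_union (fun t x => tuple_in Z t /\ tuple_in R x /\ A (t, x)).
Proof.
move=> [phi [_ [kz [bz [kr [br [Zbz [Rbr phiE]]]]]]]].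
apply: box_union_ext (box_unionI (box_union_box (@tuple_in M Z m)
  (@tuple_in M R n)) (box_union_comp (fun t => assign d t bz)
  (fun x => assign d x br) (zrsat_box_union Z R phi))) => t x /=.
have AE Zt Rx := phiE (t, x) _ _ (conj Zt Rx) (agree_assign d t bz)
  (agree_assign d x br).
split=> [[[Zt Rx] sat_tx] | [Zt [Rx Atx]]].
  by split=> //; split=> //; apply/(AE Zt Rx).
by split=> //; apply/(AE Zt Rx).
Qed.

Lemma zrdef_finitely_many_sections (L : language) (M : structure L) (d : M)
    (Z R : M -> Prop) m n (W : pt M m n -> Prop) :
  zrdef Z R W ->
  exists (N : nat) (ts : 'I_N -> ('I_m -> M)),
    (forall i, tuple_in Z (ts i)) /\
    forall t : 'I_m -> M, tuple_in Z t ->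
      exists i, forall x : 'I_n -> M, tuple_in R x ->
        (W (t, x) <-> W (ts i, x)).
Proof.
move=> /(zrdef_box_union d) /box_union_sections [K [key keyE]].
have [N [ts [Zts tsE]]] := @finite_representatives _ K (@tuple_in M Z m)
  (fun t k => key t = k) (fun t _ => ex_intro _ (key t) erefl).
exists N, ts; split=> // t Zt.
have [i [_ [<- /esym /keyE tsE_t]]] := tsE t Zt.
exists i => x Rx; have := tsE_t x; have := Zts i; tauto.
Qed.

Section InternalFamilies.

Variables (L : language) (M : structure L) (d : M) (Z R : M -> Prop).
Variables (X Y : eqset M)
  (W : pt M (es_m Y) (es_n Y) -> pt M (es_m X) (es_n X) -> Prop).
Variables (kY : nat) (GY : pt M kY 0 -> pt M (es_m Y) (es_n Y) -> Prop).
Variables (kX : nat) (GX : pt M 0 kX -> pt M (es_m X) (es_n X) -> Prop).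

Hypotheses (DXdef : zrdef Z R (es_D X)) (DYdef : zrdef Z R (es_D Y)).
Hypotheses (GYsurj : def_surj Z R GY) (GXsurj : def_surj Z R GX).
Hypothesis Wfam : def_family Z R Y X W.

Let z0 : 'I_0 -> M := fun _ => d.

Definition pulled_family (r : 'I_kY -> M) (s : 'I_kX -> M) : Prop :=
  exists (yz : 'I_(es_m Y) -> M) (xz : 'I_(es_m X) -> M),
  exists (yr : 'I_(es_n Y) -> M) (xr : 'I_(es_n X) -> M),
    tuple_in Z r /\ tuple_in Z yz /\ tuple_in Z xz /\
    tuple_in R s /\ tuple_in R yr /\ tuple_in R xr /\
    es_D Y (yz, yr) /\ es_D X (xz, xr) /\
    GY (r, z0) (yz, yr) /\ GX (z0, s) (xz, xr) /\ W (yz, yr) (xz, xr).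

Lemma pulled_family_box_union : box_union pulled_family.
Proof.
pose AA := (('I_kY -> M) * ('I_(es_m Y) -> M) * ('I_(es_m X) -> M))%type.
pose BB := (('I_kX -> M) * ('I_(es_n Y) -> M) * ('I_(es_n X) -> M))%type.
have [GYdef _] := GYsurj; have [GXdef _] := GXsurj; have [Wdef _] := Wfam.
have BDY := box_union_comp (fun a : AA => a.1.2) (fun b : BB => b.1.2)
  (zrdef_box_union d DYdef).
have BDX := box_union_comp (fun a : AA => a.2) (fun b : BB => b.2)
  (zrdef_box_union d DXdef).
have BGY := box_union_comp (fun a : AA => joinv a.1.1 a.1.2)
  (fun b : BB => joinv z0 b.1.2) (zrdef_box_union d GYdef).
have BGX := box_union_comp (fun a : AA => joinv z0 a.2)
  (fun b : BB => joinv b.1.1 b.2) (zrdef_box_union d GXdef).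
have BW := box_union_comp (fun a : AA => joinv a.1.2 a.2)
  (fun b : BB => joinv b.1.2 b.2) (zrdef_box_union d Wdef).
have Ball := box_unionI BDY (box_unionI BDX (box_unionI BGY (box_unionI BGX BW))).
apply: box_union_ext (box_union_exr (fun b : BB => b.1.1)
  (box_union_exl (fun a : AA => a.1.1) Ball)) => r s.
rewrite /pulled_family /=; split.
  move=> [[[s' yr] xr] /= [<- [[[r' yz] xz] /= [<-]]]].
  rewrite !tuple_in_joinv !leftv_joinv !rightv_joinv.
  by move=> conj_all; exists yz, xz, yr, xr; tauto.
move=> [yz [xz [yr [xr [Zr [Zyz [Zxz [Rs [Ryr [Rxr [Dy [Dx [Gy [Gx Wyx]]]]]]]]]]]]]].
exists (s, yr, xr); split=> //; exists (r, yz, xz); split=> //=.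
rewrite !tuple_in_joinv !leftv_joinv !rightv_joinv.
by have := tuple_in0 Z z0; have := tuple_in0 R z0; tauto.
Qed.

Lemma pulled_familyE y x ry sx :
  es_mem Z R Y y -> es_mem Z R X x -> ptin Z R ry -> ptin Z R sx ->
  GY ry y -> GX sx x -> (W y x <-> pulled_family ry.1 sx.2).
Proof.
case: y x ry sx => [yz yr] [xz xr] [r e] [f s] Yy Xx ry_in sx_in.
rewrite (tuple0_eq e z0) (tuple0_eq f z0) in ry_in sx_in * => Gy Gx /=.
have [[[Zyz Ryr] Dy] [[Zxz Rxr] Dx]] := (Yy, Xx).
have [[Zr _] [_ Rs]] := (ry_in, sx_in).
split=> [Wyx | [yz' [xz' [yr' [xr' [_ [Zyz' [Zxz' [_ [Ryr' [Rxr' ]]]]]]]]]]].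
  by exists yz, xz, yr, xr.
move=> [Dy' [Dx' [Gy' [Gx' Wyx']]]].
have Yy' : es_mem Z R Y (yz', yr') by [].
have Xx' : es_mem Z R X (xz', xr') by [].
have [_ [_ [GYfun _]]] := GYsurj; have [_ [_ [GXfun _]]] := GXsurj.
have [_ Winv] := Wfam.
apply: (Winv _ _ _ _ Yy' Yy Xx' Xx _ _ Wyx').
  exact: (GYfun _ _ _ ry_in Yy' Yy Gy').1 Gy.
exact: (GXfun _ _ _ sx_in Xx' Xx Gx').1 Gx.
Qed.

Lemma internal_family_finitely_many_sections :
  exists (N : nat) (ys : 'I_N -> pt M (es_m Y) (es_n Y)),
    (forall i, es_mem Z R Y (ys i)) /\
    forall y, es_mem Z R Y y ->
      exists i, forall x, es_mem Z R X x -> (W y x <-> W (ys i) x).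
Proof.
have [K [key keyE]] := box_union_sections pulled_family_box_union.
have [_ [_ [_ GYonto]]] := GYsurj; have [_ [_ [_ GXonto]]] := GXsurj.
have keyed y : es_mem Z R Y y ->
    exists k, exists ry, ptin Z R ry /\ GY ry y /\ key ry.1 = k.
  by move=> /GYonto [ry [ry_in Gy]]; exists (key ry.1), ry.
have [N [ys [Yys ysE]]] := finite_representatives keyed.
exists N, ys; split=> // y Yy.
have [i [k [[ry [ry_in [Gy <-]]] [ry' [ry'_in [Gy' /esym/keyE keyE']]]]]] :=
  ysE y Yy.
exists i => x Xx; have [sx [sx_in Gx]] := GXonto x Xx.
rewrite (pulled_familyE Yy Xx ry_in sx_in Gy Gx).
by rewrite (pulled_familyE (Yys i) Xx ry'_in sx_in Gy' Gx).
Qed.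

End InternalFamilies.

Theorem lemma2p2 (L : language) (M : structure L) (M_inh : inhabited M)
  (Z R : M -> Prop)
  (Zdef : mdef (fun x : 'I_1 -> M => Z (x ord0)))
  (Rdef : mdef (fun x : 'I_1 -> M => R (x ord0)))
  (Zse : stably_embedded Z) (Rse : stably_embedded R)
  (ZRorth : fully_orthogonal Z R) :
  (* definable families (X_t)_{t in Z^m} of subsets of R^n *)
  (forall (m n : nat) (W : pt M m n -> Prop),
     zrdef Z R W ->
     exists (N : nat) (ts : 'I_N -> ('I_m -> M)),
       (forall i, tuple_in Z (ts i)) /\
       forall t : 'I_m -> M, tuple_in Z t ->
         exists i, forall x : 'I_n -> M, tuple_in R x ->
           (W (t, x) <-> W (ts i, x)))
  /\
  (* general case: X R-internal, Y Z-internal, in (Z,R)^eq *)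
  (forall (X Y : eqset M)
     (W : pt M (es_m Y) (es_n Y) -> pt M (es_m X) (es_n X) -> Prop),
     is_eqset Z R X -> is_eqset Z R Y ->
     R_internal Z R X -> Z_internal Z R Y ->
     def_family Z R Y X W ->
     exists (N : nat) (ys : 'I_N -> pt M (es_m Y) (es_n Y)),
       (forall i, es_mem Z R Y (ys i)) /\
       forall y, es_mem Z R Y y ->
         exists i, forall x, es_mem Z R X x -> (W y x <-> W (ys i) x)).
Proof.
case: M_inh => d; split=> [m n W | X Y W [DXdef _] [DYdef _]].
  exact: zrdef_finitely_many_sections.
move=> [kX [GX GXsurj]] [kY [GY GYsurj]] Wfam.
exact: (internal_family_finitely_many_sections d DXdef DYdef GYsurj GXsurj Wfam).
Qed.
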